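(* Let $a>b\geq c>d>0$ be real numbers and define $g:\mathbb{R}\to\mathbb{R}$ by $$g(x)=\ln\frac{a^x-b^x}{c^x-d^x}\quad (x\neq 0),\qquad g(0)=\ln\frac{\ln(a/b)}{\ln(c/d)}.$$ Then $g$ is strictly convex on $\mathbb{R}$ if $ad-bc>0$, and strictly concave on $\mathbb{R}$ if $ad-bc<0$. If $ad-bc=0$, then $g$ is a linear function (namely $g(x)=x\ln\frac{b}{d}$).
   Context: The value $g(0)$ is the continuous extension of the expression $\ln\frac{a^x-b^x}{c^x-d^x}$ at $x=0$. *)

From Stdlib Require Import Reals.
Open Scope R_scope.

Definition g (a b c d : R) (x : R) : R :=
  if Req_EM_T x 0 then ln (ln (a / b) / ln (c / d))
  else ln ((Rpower a x - Rpower b x) / (Rpower c x - Rpower d x)).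

Definition strictly_convex (f : R -> R) : Prop :=
  forall x y t : R, x <> y -> 0 < t < 1 ->
    f (t * x + (1 - t) * y) < t * f x + (1 - t) * f y.

Definition strictly_concave (f : R -> R) : Prop :=
  forall x y t : R, x <> y -> 0 < t < 1 ->
    f (t * x + (1 - t) * y) > t * f x + (1 - t) * f y.

(* Write al = ln (a/b) / 2 and be = ln (c/d) / 2. Since
   a^x - b^x = 2 (ab)^(x/2) sinh (al x), the function g is the linear function
   x ln (sqrt (ab/cd)) plus h(x) = ln (sinh (al x) / sinh (be x)), and ad - bc has
   the sign of al - be.  Exchanging al and be negates h, and h = 0 when al = be, so
   everything reduces to the strict convexity of h for al > be > 0.  Its derivative
   al coth (al x) - be coth (be x) is odd, positive for x > 0 because t coth t
   increases, and increasing on (0, oo) because its derivative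
   be^2 / sinh (be x)^2 - al^2 / sinh (al x)^2 is positive, sinh t / t being
   increasing.  A continuous function whose derivative off one point is strictly
   increasing is strictly convex. *)

From Coquelicot Require Import Coquelicot.
From Stdlib Require Import Reals Lra Psatz.
Open Scope R_scope.

Lemma is_derive_continuity_pt (f : R -> R) x l : is_derive f x l -> continuity_pt f x.
Proof.
  intros Hf; apply derivable_continuous_pt; exists l.
  now apply is_derive_Reals.
Qed.

Lemma increasing_of_derive_pos (h dh : R -> R) p q : p < q ->
  (forall x, p <= x <= q -> is_derive h x (dh x)) ->
  (forall x, p < x < q -> 0 < dh x) -> h p < h q.
Proof.
  intros Hpq Hd Hpos.
  destruct (MVT_cor2 h dh p q Hpq) as [c [Hc Hcpq]].
  - intros x Hx; apply is_derive_Reals, Hd, Hx.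
  - pose proof (Hpos c Hcpq). nra.
Qed.

Section ConvexOfIncreasingDerivative.
Variables (f df : R -> R) (p : R).
Hypothesis f_cont : forall x, continuity_pt f x.
Hypothesis f_derive : forall x, x <> p -> is_derive f x (df x).
Hypothesis df_incr : forall x y, x < y -> df x < df y.

Let df_le x y : x <= y -> df x <= df y.
Proof. intros [H| ->]; [now apply Rlt_le, df_incr | apply Rle_refl]. Qed.

Lemma secant_bounds_away x y : x < y -> (p <= x \/ y <= p) ->
  df x * (y - x) <= f y - f x <= df y * (y - x).
Proof.
  intros Hxy Hp.
  destruct (MVT_gen f x y df) as [c [Hc Hfc]];
    rewrite ?Rmin_left, ?Rmax_right in * by lra.
  - intros z Hz; apply f_derive; lra.
  - intros z _; apply f_cont.
  - pose proof (df_le x c (proj1 Hc)); pose proof (df_le c y (proj2 Hc)).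
    rewrite Hfc; split; apply Rmult_le_compat_r; lra.
Qed.

Lemma secant_bounds x y : x < y -> df x * (y - x) <= f y - f x <= df y * (y - x).
Proof.
  intros Hxy.
  destruct (Rle_or_lt p x) as [Hp|Hp]; [now apply secant_bounds_away; auto|].
  destruct (Rle_or_lt y p) as [Hp'|Hp']; [now apply secant_bounds_away; auto|].
  destruct (secant_bounds_away x p Hp (or_intror (Rle_refl p))) as [L1 U1].
  destruct (secant_bounds_away p y Hp' (or_introl (Rle_refl p))) as [L2 U2].
  pose proof (df_le x p (Rlt_le _ _ Hp)); pose proof (df_le p y (Rlt_le _ _ Hp')).
  split; nra.
Qed.

Lemma secant_bounds_strict x y : x < y ->
  df x * (y - x) < f y - f x < df y * (y - x).
Proof.
  intros Hxy; set (m := (x + y) / 2).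
  assert (Hxm : x < m) by (unfold m; lra); assert (Hmy : m < y) by (unfold m; lra).
  destruct (secant_bounds x m Hxm) as [L1 U1]; destruct (secant_bounds m y Hmy) as [L2 U2].
  pose proof (df_incr x m Hxm); pose proof (df_incr m y Hmy).
  split; nra.
Qed.

Lemma strictly_convex_of_derive_increasing : strictly_convex f.
Proof.
  enough (H : forall x y t, x < y -> 0 < t < 1 ->
            f (t * x + (1 - t) * y) < t * f x + (1 - t) * f y).
  { intros x y t Hxy Ht; destruct (Rlt_or_le x y) as [Hlt|Hle]; [now apply H|].
    replace (t * x + (1 - t) * y) with ((1 - t) * y + (1 - (1 - t)) * x) by ring.
    pose proof (H y x (1 - t) ltac:(lra) ltac:(lra)); lra. }
  intros x y t Hxy Ht; set (z := t * x + (1 - t) * y).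
  assert (Hxz : x < z) by (unfold z; nra); assert (Hzy : z < y) by (unfold z; nra).
  destruct (secant_bounds_strict x z Hxz) as [_ U]; destruct (secant_bounds_strict z y Hzy) as [L _].
  assert (E : t * (z - x) = (1 - t) * (y - z)) by (unfold z; ring).
  assert (t * (f z - f x) < t * (df z * (z - x))) by (apply Rmult_lt_compat_l; lra).
  assert ((1 - t) * (df z * (y - z)) < (1 - t) * (f y - f z)) by (apply Rmult_lt_compat_l; lra).
  nra.
Qed.

End ConvexOfIncreasingDerivative.

Lemma strictly_convex_linear_add (f h : R -> R) K :
  (forall x, f x = K * x + h x) -> strictly_convex h -> strictly_convex f.
Proof.
  intros Hf Hh x y t Hxy Ht; rewrite !Hf.
  pose proof (Hh x y t Hxy Ht); nra.
Qed.

Lemma strictly_concave_linear_sub (f h : R -> R) K :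
  (forall x, f x = K * x - h x) -> strictly_convex h -> strictly_concave f.
Proof.
  intros Hf Hh x y t Hxy Ht; rewrite !Hf.
  pose proof (Hh x y t Hxy Ht); nra.
Qed.

Lemma exp_opp_mul t : exp t * exp (- t) = 1.
Proof. now rewrite <- exp_plus, Rplus_opp_r, exp_0. Qed.

Lemma sinh_opp t : sinh (- t) = - sinh t.
Proof. unfold sinh; rewrite Ropp_involutive; field. Qed.

Lemma cosh_opp t : cosh (- t) = cosh t.
Proof. unfold cosh; rewrite Ropp_involutive; field. Qed.

Lemma sinh_pos t : 0 < t -> 0 < sinh t.
Proof. intros Ht; rewrite <- sinh_0; now apply sinh_lt. Qed.

Lemma sinh_neg t : t < 0 -> sinh t < 0.
Proof. intros Ht; rewrite <- sinh_0; now apply sinh_lt. Qed.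

Lemma sinh_neq0 t : t <> 0 -> sinh t <> 0.
Proof.
  intros Ht; destruct (Rlt_or_le t 0) as [H|H].
  - pose proof (sinh_neg t H); lra.
  - pose proof (sinh_pos t ltac:(lra)); lra.
Qed.

Lemma cosh_gt_1 t : t <> 0 -> 1 < cosh t.
Proof.
  intros Ht; unfold cosh.
  pose proof (exp_ineq1 t Ht); pose proof (exp_ineq1 (- t) ltac:(lra)); lra.
Qed.

Lemma sinh_double t : sinh (2 * t) = 2 * sinh t * cosh t.
Proof.
  unfold sinh, cosh; replace (2 * t) with (t + t) by ring.
  rewrite Ropp_plus_distr, !exp_plus; pose proof (exp_opp_mul t); nra.
Qed.

Lemma sinh_gt_id t : 0 < t -> t < sinh t.
Proof.
  intros Ht.
  enough (sinh 0 - 0 < sinh t - t) by (rewrite sinh_0 in *; lra).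
  apply (increasing_of_derive_pos (fun u => sinh u - u) (fun u => cosh u - 1)); auto.
  - intros u _; unfold sinh, cosh; auto_derive; [exact I | field].
  - intros u Hu; pose proof (cosh_gt_1 u ltac:(lra)); lra.
Qed.

Lemma sinh_lt_mul_cosh t : 0 < t -> sinh t < t * cosh t.
Proof.
  intros Ht.
  enough (0 * cosh 0 - sinh 0 < t * cosh t - sinh t) by (rewrite sinh_0 in *; lra).
  apply (increasing_of_derive_pos (fun u => u * cosh u - sinh u) (fun u => u * sinh u)); auto.
  - intros u _; unfold sinh, cosh; auto_derive; [exact I | field].
  - intros u Hu; pose proof (sinh_pos u ltac:(lra)); nra.
Qed.

Definition coth t := cosh t / sinh t.

Lemma exp_mul_exp_sub1_neq0 t : t <> 0 -> exp t * exp t - 1 <> 0.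
Proof.
  intros Ht E.
  assert (H : exp (t + t) = exp 0) by (rewrite exp_plus, exp_0; lra).
  apply exp_inv in H; lra.
Qed.

Lemma mul_coth_lt s t : 0 < s -> s < t -> s * coth s < t * coth t.
Proof.
  intros Hs Hst.
  apply (increasing_of_derive_pos (fun u => u * coth u)
           (fun u => (sinh u * cosh u - u) / sinh u ^ 2)); auto.
  - intros u Hu; pose proof (sinh_pos u ltac:(lra)) as Hsh.
    unfold coth, sinh, cosh in *; auto_derive; [lra|].
    rewrite exp_Ropp in *; field.
    split; [apply exp_neq_0 | apply exp_mul_exp_sub1_neq0; lra].
  - intros u Hu; pose proof (sinh_pos u ltac:(lra)).
    pose proof (sinh_gt_id (2 * u) ltac:(lra)); rewrite sinh_double in *.
    apply Rdiv_lt_0_compat; [lra | apply pow_lt; lra].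
Qed.

Lemma sinh_div_lt s t : 0 < s -> s < t -> sinh s / s < sinh t / t.
Proof.
  intros Hs Hst.
  apply (increasing_of_derive_pos (fun u => sinh u / u)
           (fun u => (u * cosh u - sinh u) / u ^ 2)); auto.
  - intros u Hu; unfold sinh, cosh; auto_derive; [lra|].
    field; lra.
  - intros u Hu; pose proof (sinh_lt_mul_cosh u ltac:(lra)).
    apply Rdiv_lt_0_compat; [lra | apply pow_lt; lra].
Qed.

Definition sinhc (k x : R) : R := if Req_EM_T x 0 then k else sinh (k * x) / x.

Lemma continuity_pt_sinhc_0 k : continuity_pt (sinhc k) 0.
Proof.
  assert (Hd : derivable_pt_lim (fun x => sinh (k * x)) 0 k).
  { apply is_derive_Reals; unfold sinh; auto_derive; [exact I|].
    rewrite Rmult_0_r, Ropp_0, exp_0; field. }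
  intros eps Heps; destruct (Hd eps Heps) as [delta Hdelta].
  exists delta; split; [apply cond_pos|].
  intros x [[_ Hx0] Hx]; simpl in Hx |- *; unfold R_dist in *; rewrite Rminus_0_r in Hx.
  specialize (Hdelta x (not_eq_sym Hx0) Hx).
  rewrite Rplus_0_l, Rmult_0_r, sinh_0, Rminus_0_r in Hdelta.
  unfold sinhc; destruct (Req_EM_T x 0); [congruence|].
  now destruct (Req_EM_T 0 0).
Qed.

Definition log_sinh_ratio (al be x : R) : R :=
  if Req_EM_T x 0 then ln (al / be) else ln (sinh (al * x) / sinh (be * x)).

(* [0] is the limit of the slope at [x = 0]. *)
Definition log_sinh_ratio_slope (al be x : R) : R :=
  if Req_EM_T x 0 then 0 else al * coth (al * x) - be * coth (be * x).

Section LogSinhRatio.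
Variables al be : R.
Hypothesis al_pos : 0 < al.
Hypothesis be_pos : 0 < be.

Lemma sinh_ratio_pos x : x <> 0 -> 0 < sinh (al * x) / sinh (be * x).
Proof.
  intros Hx; destruct (Rlt_or_le x 0) as [H|H].
  - pose proof (sinh_neg (al * x) ltac:(nra)); pose proof (sinh_neg (be * x) ltac:(nra)).
    replace (sinh (al * x) / sinh (be * x)) with (- sinh (al * x) / - sinh (be * x))
      by (field; lra).
    apply Rdiv_lt_0_compat; lra.
  - pose proof (sinh_pos (al * x) ltac:(nra)); pose proof (sinh_pos (be * x) ltac:(nra)).
    apply Rdiv_lt_0_compat; lra.
Qed.

Lemma is_derive_log_sinh_ratio x : x <> 0 ->
  is_derive (log_sinh_ratio al be) x (log_sinh_ratio_slope al be x).
Proof.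
  intros Hx.
  apply (is_derive_ext_loc (fun y => ln (sinh (al * y) / sinh (be * y)))).
  { apply (filter_imp (fun y => y <> 0)); [|now apply open_neq].
    intros y Hy; unfold log_sinh_ratio; now destruct (Req_EM_T y 0). }
  unfold log_sinh_ratio_slope; destruct (Req_EM_T x 0) as [|_]; [contradiction|].
  pose proof (sinh_ratio_pos x Hx) as Hr.
  pose proof (sinh_neq0 (al * x) ltac:(nra)); pose proof (sinh_neq0 (be * x) ltac:(nra)).
  unfold coth, sinh, cosh in *; auto_derive; [repeat split; auto|].
  field; split; lra.
Qed.

Lemma continuity_log_sinh_ratio x : continuity_pt (log_sinh_ratio al be) x.
Proof.
  destruct (Req_dec x 0) as [->|Hx].
  2: { eapply is_derive_continuity_pt, is_derive_log_sinh_ratio, Hx. }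
  apply continuity_pt_ext with (f := fun x => ln (sinhc al x / sinhc be x)).
  - intros y; unfold log_sinh_ratio, sinhc; destruct (Req_EM_T y 0) as [|Hy]; f_equal.
    field; split; [apply sinh_neq0; nra | exact Hy].
  - apply (continuity_pt_comp (fun x => sinhc al x / sinhc be x) ln).
    + apply continuity_pt_div; try apply continuity_pt_sinhc_0.
      unfold sinhc; destruct (Req_EM_T 0 0); lra.
    + unfold sinhc; destruct (Req_EM_T 0 0) as [_|]; [|lra].
      eapply is_derive_continuity_pt, is_derive_Reals, derivable_pt_lim_ln.
      apply Rdiv_lt_0_compat; lra.
Qed.

Lemma log_sinh_ratio_swap x : log_sinh_ratio al be x = - log_sinh_ratio be al x.
Proof.
  unfold log_sinh_ratio; destruct (Req_EM_T x 0) as [|Hx].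
  - rewrite !ln_div by lra; ring.
  - pose proof (sinh_ratio_pos x Hx).
    replace (sinh (be * x) / sinh (al * x)) with (/ (sinh (al * x) / sinh (be * x))).
    + rewrite ln_Rinv by lra; ring.
    + field; split; apply sinh_neq0; nra.
Qed.
End LogSinhRatio.

Section LogSinhRatioConvex.
Variables al be : R.
Hypothesis be_pos : 0 < be.
Hypothesis be_lt_al : be < al.

Lemma log_sinh_ratio_slope_opp x :
  log_sinh_ratio_slope al be (- x) = - log_sinh_ratio_slope al be x.
Proof.
  unfold log_sinh_ratio_slope, coth.
  destruct (Req_EM_T (- x) 0); destruct (Req_EM_T x 0); try lra.
  rewrite <- !Ropp_mult_distr_r, !sinh_opp, !cosh_opp; field.
  split; apply sinh_neq0; nra.
Qed.

Lemma log_sinh_ratio_slope_pos x : 0 < x -> 0 < log_sinh_ratio_slope al be x.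
Proof.
  intros Hx; unfold log_sinh_ratio_slope; destruct (Req_EM_T x 0); [lra|].
  pose proof (mul_coth_lt (be * x) (al * x) ltac:(nra) ltac:(nra)).
  apply (Rmult_lt_reg_r x); nra.
Qed.

Lemma log_sinh_ratio_slope_lt_pos x y : 0 < x -> x < y ->
  log_sinh_ratio_slope al be x < log_sinh_ratio_slope al be y.
Proof.
  intros Hx Hxy; unfold log_sinh_ratio_slope.
  destruct (Req_EM_T x 0); destruct (Req_EM_T y 0); try lra.
  apply (increasing_of_derive_pos (fun z => al * coth (al * z) - be * coth (be * z))
    (fun z => (be / sinh (be * z)) ^ 2 - (al / sinh (al * z)) ^ 2)); auto.
  - intros z Hz.
    pose proof (sinh_pos (al * z) ltac:(nra)); pose proof (sinh_pos (be * z) ltac:(nra)).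
    unfold coth, sinh, cosh in *; auto_derive; [repeat split; lra|].
    rewrite !exp_Ropp in *; field.
    repeat split; try apply exp_neq_0; apply exp_mul_exp_sub1_neq0; nra.
  - intros z Hz.
    pose proof (sinh_div_lt (be * z) (al * z) ltac:(nra) ltac:(nra)).
    pose proof (sinh_pos (be * z) ltac:(nra)); pose proof (sinh_pos (al * z) ltac:(nra)).
    assert (Hlt : al / sinh (al * z) < be / sinh (be * z)).
    { apply (Rmult_lt_reg_r (sinh (al * z) * sinh (be * z) / z)).
      - apply Rdiv_lt_0_compat; nra.
      - replace (al / sinh (al * z) * (sinh (al * z) * sinh (be * z) / z))
          with (sinh (be * z) / (be * z) * (al * be)) by (field; lra).
        replace (be / sinh (be * z) * (sinh (al * z) * sinh (be * z) / z))
          with (sinh (al * z) / (al * z) * (al * be)) by (field; lra).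
        apply Rmult_lt_compat_r; nra. }
    assert (0 < al / sinh (al * z)) by (apply Rdiv_lt_0_compat; lra).
    nra.
Qed.

Lemma log_sinh_ratio_slope_increasing x y : x < y ->
  log_sinh_ratio_slope al be x < log_sinh_ratio_slope al be y.
Proof.
  intros Hxy.
  assert (Hnonneg : forall z, 0 <= z -> 0 <= log_sinh_ratio_slope al be z).
  { intros z [Hz| <-]; [now apply Rlt_le, log_sinh_ratio_slope_pos|].
    unfold log_sinh_ratio_slope; destruct (Req_EM_T 0 0); lra. }
  destruct (Rlt_or_le 0 x) as [Hx|Hx]; [now apply log_sinh_ratio_slope_lt_pos|].
  destruct (Rlt_or_le y 0) as [Hy|Hy].
  - pose proof (log_sinh_ratio_slope_lt_pos (- y) (- x) ltac:(lra) ltac:(lra)).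
    rewrite !log_sinh_ratio_slope_opp in *; lra.
  - pose proof (Hnonneg y Hy); pose proof (Hnonneg (- x) ltac:(lra)).
    rewrite log_sinh_ratio_slope_opp in *.
    destruct (Rlt_or_le x 0) as [Hx'|Hx'].
    + pose proof (log_sinh_ratio_slope_pos (- x) ltac:(lra)).
      rewrite log_sinh_ratio_slope_opp in *; lra.
    + pose proof (log_sinh_ratio_slope_pos y ltac:(lra)); lra.
Qed.

Lemma log_sinh_ratio_strictly_convex : strictly_convex (log_sinh_ratio al be).
Proof.
  apply (strictly_convex_of_derive_increasing _ (log_sinh_ratio_slope al be) 0).
  - apply continuity_log_sinh_ratio; lra.
  - apply is_derive_log_sinh_ratio; lra.
  - apply log_sinh_ratio_slope_increasing.
Qed.
End LogSinhRatioConvex.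

Lemma Rpower_sub_Rpower a b x :
  Rpower a x - Rpower b x = 2 * exp ((ln a + ln b) / 2 * x) * sinh ((ln a - ln b) / 2 * x).
Proof.
  unfold Rpower, sinh.
  replace (x * ln a) with ((ln a + ln b) / 2 * x + (ln a - ln b) / 2 * x) by field.
  replace (x * ln b) with ((ln a + ln b) / 2 * x + - ((ln a - ln b) / 2 * x)) by field.
  rewrite !exp_plus; field.
Qed.

Lemma g_eq_linear_add_log_sinh_ratio a b c d x : 0 < b -> b < a -> 0 < d -> d < c ->
  g a b c d x = ((ln a + ln b) / 2 - (ln c + ln d) / 2) * x
                + log_sinh_ratio ((ln a - ln b) / 2) ((ln c - ln d) / 2) x.
Proof.
  intros Hb Hab Hd Hcd.
  pose proof (ln_increasing b a Hb Hab); pose proof (ln_increasing d c Hd Hcd).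
  unfold g, log_sinh_ratio; destruct (Req_EM_T x 0) as [->|Hx].
  - rewrite (ln_div a b), (ln_div c d) by lra; replace ((ln a - ln b) / (ln c - ln d))
      with ((ln a - ln b) / 2 / ((ln c - ln d) / 2)) by (field; lra); ring.
  - rewrite !Rpower_sub_Rpower.
    set (al := (ln a - ln b) / 2); set (be := (ln c - ln d) / 2).
    set (m := (ln a + ln b) / 2); set (n := (ln c + ln d) / 2).
    pose proof (sinh_ratio_pos al be ltac:(unfold al; lra) ltac:(unfold be; lra) x Hx).
    pose proof (sinh_neq0 (be * x) ltac:(intro; apply Hx; unfold be in *; nra)).
    replace (2 * exp (m * x) * sinh (al * x) / (2 * exp (n * x) * sinh (be * x)))
      with (exp ((m - n) * x) * (sinh (al * x) / sinh (be * x))).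
    + rewrite ln_mult, ln_exp by (apply exp_pos || lra); ring.
    + replace ((m - n) * x) with (m * x + - (n * x)) by ring.
      rewrite exp_plus, exp_Ropp; field; split; [assumption | apply exp_neq_0].
Qed.

Theorem theorem2p1 (a b c d : R) (hab : a > b) (hbc : b >= c) (hcd : c > d) (hd : d > 0) :
  (a * d - b * c > 0 -> strictly_convex (g a b c d)) /\
  (a * d - b * c < 0 -> strictly_concave (g a b c d)) /\
  (a * d - b * c = 0 -> forall x : R, g a b c d x = x * ln (b / d)).
Proof.
  (* [hbc] only serves to make [b] positive *)
  assert (Hb : 0 < b) by lra.
  pose proof (ln_increasing b a Hb hab); pose proof (ln_increasing d c hd hcd).
  set (al := (ln a - ln b) / 2); set (be := (ln c - ln d) / 2).
  set (K := (ln a + ln b) / 2 - (ln c + ln d) / 2).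
  assert (Hal : 0 < al) by (unfold al; lra); assert (Hbe : 0 < be) by (unfold be; lra).
  assert (Hg : forall x, g a b c d x = K * x + log_sinh_ratio al be x)
    by (intros; apply g_eq_linear_add_log_sinh_ratio; lra).
  assert (Hcmp : ln (a * d) - ln (b * c) = 2 * (al - be))
    by (rewrite !ln_mult by lra; unfold al, be; field).
  repeat split.
  - intros Hpos; apply (strictly_convex_linear_add _ _ K Hg).
    apply log_sinh_ratio_strictly_convex; [lra|].
    pose proof (ln_increasing (b * c) (a * d) ltac:(nra) ltac:(lra)); lra.
  - intros Hneg; apply (strictly_concave_linear_sub _ (log_sinh_ratio be al) K).
    { intros x; rewrite Hg, (log_sinh_ratio_swap al be) by lra; ring. }
    apply log_sinh_ratio_strictly_convex; [lra|].
    pose proof (ln_increasing (a * d) (b * c) ltac:(nra) ltac:(lra)); lra.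
  - intros Heq x; rewrite Hg.
    assert (Hab_eq : al = be) by (replace (a * d) with (b * c) in Hcmp by lra; lra).
    assert (HK : K = ln b - ln d) by (unfold K, al, be in *; lra).
    (* with equal parameters the swap identity reads [h x = - h x] *)
    pose proof (log_sinh_ratio_swap al al Hal Hal x).
    rewrite <- Hab_eq, HK, ln_div by lra; lra.
Qed.
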